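(* For all finite sets of formulas $\Gamma,\Delta$: if the sequent $\Gamma\Rightarrow\Delta$ is provable in $\mathsf{CLp}$, then $\Gamma\Vdash^{cf}\Delta$.
   Context: Fix a countably infinite set $\mathsf{At}$ of atoms. Formulas are built from atoms and the constant $\bot$ using the binary connectives $\land,\lor,\to$. All contexts are finite sets (not multisets) of formulas; a comma denotes union; a subscript $\mathsf{At}$ indicates a finite set of atoms. An atomic sequent has the form $\Gamma_{\mathsf{At}} \Rightarrow \Delta_{\mathsf{At}}$. An atomic rule has finitely many (possibly zero) atomic sequents as premises and one atomic sequent as conclusion; a rule with zero premises is an atomic axiom. A base is a (possibly empty) set of atomic rules; $\mathcal{C}\supseteq\mathcal{B}$ ($\mathcal{C}$ extends $\mathcal{B}$) if $\mathcal{C}$ contains every rule of $\mathcal{B}$. Derivability $\vdash_{\mathcal{B}}$ of atomic sequents is the least relation such that: (Axiom/Weakening) if an atomic axiom with conclusion $\Gamma_{\mathsf{At}}\Rightarrow\Delta_{\mathsf{At}}$ is in $\mathcal{B}$, then $\vdash_{\mathcal{B}} \Theta_{\mathsf{At}},\Gamma_{\mathsf{At}}\Rightarrow\Delta_{\mathsf{At}},\Sigma_{\mathsf{At}}$ for all sets of atoms $\Theta_{\mathsf{At}},\Sigma_{\mathsf{At}}$; (Mix) if a rule with premises $\Gamma^i_{\mathsf{At}}\Rightarrow\Delta^i_{\mathsf{At}}$ ($1\le i\le n$) and conclusion $\Gamma_{\mathsf{At}}\Rightarrow\Delta_{\mathsf{At}}$ is in $\mathcal{B}$ and $\vdash_{\mathcal{B}}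 \Theta^i_{\mathsf{At}},\Gamma^i_{\mathsf{At}}\Rightarrow\Delta^i_{\mathsf{At}},\Sigma^i_{\mathsf{At}}$ for each $i$, then $\vdash_{\mathcal{B}} \Theta^1_{\mathsf{At}},\dots,\Theta^n_{\mathsf{At}},\Gamma_{\mathsf{At}}\Rightarrow\Delta_{\mathsf{At}},\Sigma^1_{\mathsf{At}},\dots,\Sigma^n_{\mathsf{At}}$. Support $\Vdash_{\mathcal{B}}$: (At) $\Vdash_{\mathcal{B}}\Gamma_{\mathsf{At}}$ iff $\vdash_{\mathcal{B}}\ \Rightarrow\Gamma_{\mathsf{At}}$; ($\land$) $\Vdash_{\mathcal{B}} A\land B,\Gamma$ iff $\Vdash_{\mathcal{B}}A,\Gamma$ and $\Vdash_{\mathcal{B}}B,\Gamma$; ($\lor$) $\Vdash_{\mathcal{B}}A\lor B,\Gamma$ iff $\Vdash_{\mathcal{B}}A,B,\Gamma$; ($\to$) $\Vdash_{\mathcal{B}}A\to B,\Gamma$ iff $A\Vdash_{\mathcal{B}}B,\Gamma$; ($\bot$) $\Vdash_{\mathcal{B}}\bot,\Gamma$ iff $\Vdash_{\mathcal{B}}\Gamma$; (Inf) for $n\ge1$, $\{A^1,\dots,A^n\}\Vdash_{\mathcal{B}}\Delta$ iff for every $\mathcal{C}\supseteq\mathcal{B}$ and all sets of atoms $\Theta^1_{\mathsf{At}},\dots,\Theta^n_{\mathsf{At}}$, if $\Vdash_{\mathcal{C}}\Theta^i_{\mathsf{At}},A^i$ for all $i$ then $\Vdash_{\mathcal{C}}\Theta^1_{\mathsf{At}},\dots,\Theta^n_{\mathsf{At}},\Delta$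 (and $\varnothing\Vdash_{\mathcal{B}}\Delta$ means $\Vdash_{\mathcal{B}}\Delta$). The atomic identity rule $\mathsf{Ainit}$ is the atomic axiom $\Gamma_{\mathsf{At}},p\Rightarrow p,\Delta_{\mathsf{At}}$. $\mathcal{HS}$ is the base consisting of all instances of $\mathsf{Ainit}$ (all atoms $p$, all sets of atoms). Cut-free validity: $\Gamma\Vdash^{cf}\Delta$ iff $\Gamma\Vdash_{\mathcal{B}}\Delta$ for every base $\mathcal{B}\supseteq\mathcal{HS}$. $\mathsf{CLp}$ is the sequent calculus on sequents $\Gamma\Rightarrow\Delta$ (finite sets of formulas) with rules: $\mathsf{init}$: $\Gamma,A\Rightarrow A,\Delta$; $L\bot$: $\Gamma,\bot\Rightarrow\Delta$; $R\bot$: from $\Gamma\Rightarrow\Delta$ infer $\Gamma\Rightarrow\bot,\Delta$; $L\land$: from $A,B,\Gamma\Rightarrow\Delta$ infer $A\land B,\Gamma\Rightarrow\Delta$; $R\land$: from $\Gamma\Rightarrow\Delta,A$ and $\Gamma'\Rightarrow\Delta',B$ infer $\Gamma,\Gamma'\Rightarrow\Delta,\Delta',A\land B$; $L\lor$: from $A,\Gamma\Rightarrow\Delta$ and $B,\Gamma'\Rightarrow\Delta'$ infer $A\lor B,\Gamma,\Gamma'\Rightarrow\Delta,\Delta'$; $R\lor$: from $\Gamma\Rightarrow\Delta,A,B$ infer $\Gamma\Rightarrow\Delta,A\lor B$; $L\to$: from $\Gamma\Rightarrow\Delta,A$ and $B,\Gamma'\Rightarrow\Delta'$ infer $A\to B,\Gamma,\Gamma'\Rightarrow\Delta,\Delta'$;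 $R\to$: from $A,\Gamma\Rightarrow\Delta,B$ infer $\Gamma\Rightarrow\Delta,A\to B$. *)

From HB Require Import structures.
From mathcomp Require Import all_boot.
From mathcomp Require Import finmap.
Set Implicit Arguments. Unset Strict Implicit. Unset Printing Implicit Defensive.
Local Open Scope fset_scope.

Definition atom := nat.

Inductive form : Type :=
| Atom : atom -> form
| Bot : form
| And : form -> form -> form
| Or : form -> form -> form
| Imp : form -> form -> form.

Fixpoint form_enc (F : form) : GenTree.tree nat :=
  match F with
  | Atom p => GenTree.Leaf p
  | Bot => GenTree.Node 0 [::]
  | And A B => GenTree.Node 1 [:: form_enc A; form_enc B]
  | Or A B => GenTree.Node 2 [:: form_enc A; form_enc B]
  | Imp A B => GenTree.Node 3 [:: form_enc A; form_enc B]
  end.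

Fixpoint form_dec (t : GenTree.tree nat) : option form :=
  match t with
  | GenTree.Leaf p => Some (Atom p)
  | GenTree.Node 0 [::] => Some Bot
  | GenTree.Node n [:: a; b] =>
      match form_dec a, form_dec b with
      | Some A, Some B =>
          match n with
          | 1 => Some (And A B) | 2 => Some (Or A B) | 3 => Some (Imp A B)
          | _ => None end
      | _, _ => None end
  | _ => None
  end.

Lemma form_encK : pcancel form_enc form_dec.
Proof. by elim=> //= [A -> B ->|A -> B ->|A -> B ->]. Qed.

HB.instance Definition _ := Countable.copy form (pcan_type form_encK).

Definition asequent := ({fset atom} * {fset atom})%type.

Record arule := ARule { premises : seq asequent; conclusion : asequent }.

Definition base := arule -> Prop.

Definition extends (B C : base) : Prop := forall r, B r -> C r.

Inductive derivable (B : base) : {fset atom} -> {fset atom} -> Prop :=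
| der_axiom : forall r, B r -> premises r = [::] ->
    forall Theta Sigma : {fset atom},
      derivable B (Theta `|` (conclusion r).1) ((conclusion r).2 `|` Sigma)
| der_mix : forall r, B r -> 0 < size (premises r) ->
    forall Theta Sigma : nat -> {fset atom},
      (forall i, i < size (premises r) ->
         derivable B (Theta i `|` (nth (fset0, fset0) (premises r) i).1)
                     ((nth (fset0, fset0) (premises r) i).2 `|` Sigma i)) ->
      derivable B ((\bigcup_(i <- iota 0 (size (premises r))) Theta i)
                     `|` (conclusion r).1)
                  ((conclusion r).2
                     `|` \bigcup_(i <- iota 0 (size (premises r))) Sigma i).

Definition is_atom (F : form) : bool := if F is Atom _ then true else false.
Definition get_atom (F : form) : option atom := if F is Atom p then Some p else None.

Definition atoms_of (D : {fset form}) : {fset atom} := [fset p in pmap get_atom D].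

Definition atomset (Th : {fset atom}) : {fset form} := Atom @` Th.

Definition pick_complex (D : {fset form}) : option form :=
  ohead [seq F <- (D : seq form) | ~~ is_atom F].

Fixpoint fsize (F : form) : nat :=
  match F with
  | Atom _ => 0
  | Bot => 1
  | And A B | Or A B | Imp A B => (fsize A + fsize B).+1
  end.

Definition weight (D : {fset form}) : nat := \sum_(F <- D) fsize F.

(** Support with fuel: a non-atomic formula F of D is chosen and D is
    decomposed as F, (D \ F) according to the clauses of the paper; the
    fuel [weight D] is always sufficient. *)
Fixpoint supp (n : nat) (B : base) (D : {fset form}) : Prop :=
  match n with
  | 0 => derivable B fset0 (atoms_of D)
  | n'.+1 =>
    match pick_complex D with
    | None => derivable B fset0 (atoms_of D)
    | Some F =>
      let G := D `\ F in
      match F with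
      | And A C => supp n' B (A |` G) /\ supp n' B (C |` G)
      | Or A C => supp n' B (A |` (C |` G))
      | Imp A C =>                                           (* (->) + (Inf), n = 1 *)
          forall B', extends B B' -> forall Th : {fset atom},
            supp n' B' (A |` atomset Th) -> supp n' B' (C |` (atomset Th `|` G))
      | Bot => supp n' B G
      | Atom _ => derivable B fset0 (atoms_of D)             (* unreachable *)
      end
    end
  end.

Definition support (B : base) (D : {fset form}) : Prop := supp (weight D) B D.

(** Gamma ||-_B Delta, clause (Inf); the atom sets Theta^i are indexed by the
    (distinct) elements A^i of Gamma. *)
Definition supports (B : base) (Gamma Delta : {fset form}) : Prop :=
  if Gamma == fset0 then support B Delta
  else forall C, extends B C -> forall Theta : form -> {fset atom},
    (forall A, A \in Gamma -> support C (atomset (Theta A) `|` [fset A])) ->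
    support C (atomset (\bigcup_(A <- Gamma) Theta A) `|` Delta).

Definition HS : base := fun r =>
  premises r = [::] /\
  exists (p : atom) (G D : {fset atom}), conclusion r = (G `|` [fset p], [fset p] `|` D).

Definition cf_valid (Gamma Delta : {fset form}) : Prop :=
  forall B, extends HS B -> supports B Gamma Delta.

Inductive CLp : {fset form} -> {fset form} -> Prop :=
| CLp_init : forall G D A, CLp (G `|` [fset A]) ([fset A] `|` D)
| CLp_Lbot : forall G D, CLp (G `|` [fset Bot]) D
| CLp_Rbot : forall G D, CLp G D -> CLp G ([fset Bot] `|` D)
| CLp_Land : forall G D A B,
    CLp ([fset A; B] `|` G) D -> CLp ([fset And A B] `|` G) D
| CLp_Rand : forall G D G' D' A B,
    CLp G (D `|` [fset A]) -> CLp G' (D' `|` [fset B]) ->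
    CLp (G `|` G') (D `|` D' `|` [fset And A B])
| CLp_Lor : forall G D G' D' A B,
    CLp ([fset A] `|` G) D -> CLp ([fset B] `|` G') D' ->
    CLp ([fset Or A B] `|` G `|` G') (D `|` D')
| CLp_Ror : forall G D A B,
    CLp G (D `|` [fset A; B]) -> CLp G (D `|` [fset Or A B])
| CLp_Limp : forall G D G' D' A B,
    CLp G (D `|` [fset A]) -> CLp ([fset B] `|` G') D' ->
    CLp ([fset Imp A B] `|` G `|` G') (D `|` D')
| CLp_Rimp : forall G D A B,
    CLp ([fset A] `|` G) (D `|` [fset B]) -> CLp G (D `|` [fset Imp A B]).

(* Support is recharacterised combinatorially.  Unfolding the clauses, a set
   [D] is supported in [B] iff every extension [C] derives every set of atoms
   [P] into which all of [D] "reduces", where a conjunction reduces if one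
   conjunct does, a disjunction if both disjuncts do, and [A -> C] if [C] does
   and some hypothesis [(A, Th)], i.e. a supported [A, Th], has [Th] inside [P].
   In this form every rule of CLp is sound, the two-premise left rules through
   a cut on their principal formula. *)
From Pilot Require Import Defs.
From HB Require Import structures.
From mathcomp Require Import all_boot.
From mathcomp Require Import finmap.
From mathcomp Require Import zify.
Set Implicit Arguments. Unset Strict Implicit. Unset Printing Implicit Defensive.
Local Open Scope fset_scope.

Lemma weight_fsetD1 D F : F \in D -> weight D = (fsize F + weight (D `\ F))%N.
Proof. by move=> FD; rewrite /weight (big_fsetD1 _ FD). Qed.

Lemma weight_fsubset A B : A `<=` B -> weight A <= weight B.
Proof.
move=> AB; rewrite /weight [X in _ <= X](big_fsetID _ (mem A)) /=.
have -> : [fset x in B | x \in A] = A.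
  apply/fsetP=> x; rewrite !inE /=; case xA: (x \in A); last by rewrite andbF.
  by rewrite (fsubsetP AB).
exact: leq_addr.
Qed.

Lemma weightU X Y : weight (X `|` Y) <= (weight X + weight Y)%N.
Proof.
rewrite /weight (big_fsetID _ (mem X)) /=.
have -> : [fset x in X `|` Y | x \in X] = X.
  by apply/fsetP=> x; rewrite !inE /=; case: (x \in X); rewrite ?andbF.
rewrite leq_add2l; apply: weight_fsubset; apply/fsubsetP=> x; rewrite !inE /=.
by case/andP=> /orP[->|//].
Qed.

Lemma weight_fsetU1 A X : weight (A |` X) <= (fsize A + weight X)%N.
Proof. by rewrite -[fsize A](big_seq_fset1 addn); apply: weightU. Qed.

Lemma weight_atomset Th : weight (atomset Th) = 0.
Proof. by rewrite /weight big_seq big1 // => F /imfsetP [p _ ->]. Qed.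

Lemma fsize_le_weight D F : F \in D -> fsize F <= weight D.
Proof. by move=> /weight_fsetD1 ->; apply: leq_addr. Qed.

Lemma fsize_gt0 F : ~~ is_atom F -> 0 < fsize F.
Proof. by case: F. Qed.

Lemma pick_complexP D F : pick_complex D = Some F -> F \in D /\ ~~ is_atom F.
Proof.
rewrite /pick_complex; case E: [seq _ <- _ | _] => [|x s] //= [<-].
have : x \in [seq F <- (D : seq form) | ~~ is_atom F] by rewrite E inE eqxx.
by rewrite mem_filter => /andP[-> ->].
Qed.

Lemma pick_complex_None D : pick_complex D = None -> forall F, F \in D -> is_atom F.
Proof.
rewrite /pick_complex; case E: [seq _ <- _ | _] => [|x s] //= _ F FD.
apply/negPn/negP => nF.
have : F \in [seq F <- (D : seq form) | ~~ is_atom F] by rewrite mem_filter nF FD.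
by rewrite E.
Qed.

Lemma mem_atoms_of D p : (p \in atoms_of D) = (Atom p \in D).
Proof.
rewrite /atoms_of !inE /= mem_pmap.
apply/mapP/idP => [[F FD]|FD]; last by exists (Atom p).
by case: F FD => //= q FD [->].
Qed.

Lemma mem_atomset Th F : (F \in atomset Th) = if F is Atom p then p \in Th else false.
Proof. by apply/imfsetP/idP => [[p pT ->]//|]; case: F => // p pT; exists p. Qed.

Lemma extends_refl B : extends B B. Proof. by []. Qed.

Lemma extends_trans B C E : extends B C -> extends C E -> extends B E.
Proof. by move=> BC CE r /BC /CE. Qed.

Lemma derivable_extends B C X Y : extends B C -> derivable B X Y -> derivable C X Y.
Proof.
move=> BC; elim => [r Br pr Th Sg|r Br pr Th Sg _ IH].
  exact: der_axiom (BC _ Br) pr Th Sg.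
exact: der_mix (BC _ Br) pr Th Sg IH.
Qed.

Lemma derivable_weakenr B X Y Y' : Y `<=` Y' -> derivable B X Y -> derivable B X Y'.
Proof.
move=> + d; elim: d Y' => [r Br pr Th Sg|r Br pr Th Sg _ IH] Y' sub.
  have -> : Y' = (conclusion r).2 `|` (Sg `|` Y').
    apply/fsetP=> x; rewrite !inE; apply/idP/idP => [->|]; first by rewrite !orbT.
    by case/orP=> [xc|/orP[xs|//]]; apply: (fsubsetP sub); rewrite !inE ?xc ?xs ?orbT.
  exact: der_axiom.
have d := der_mix Br pr (Theta := Th) (Sigma := fun i => Sg i `|` Y')
  (fun i lt => IH i lt _ (fsetUS _ (fsubsetUl _ _))).
suff <- : (conclusion r).2 `|` \bigcup_(i <- iota 0 (size (premises r))) (Sg i `|` Y') = Y'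
  by [].
apply/fsetP=> x; apply/idP/idP.
  case/fsetUP => [xc|/bigfcupP [i /andP[iI _] /fsetUP [xs|//]]];
    apply: (fsubsetP sub); rewrite inE ?xc //.
  by apply/orP; right; apply/bigfcupP; exists i => //; rewrite iI.
move=> xY; apply/fsetUP; right; apply/bigfcupP; exists 0; first by rewrite mem_iota pr.
by rewrite inE xY orbT.
Qed.

Definition hyp := (form * {fset atom})%type.

Fixpoint reduces (F : form) (H : seq hyp) (P : {fset atom}) : Prop :=
  match F with
  | Atom p => p \in P
  | Bot => True
  | And A C => reduces A H P \/ reduces C H P
  | Or A C => reduces A H P /\ reduces C H P
  | Imp A C => (exists Th, (A, Th) \in H /\ Th `<=` P) /\ reduces C H P
  end.

Definition reduces_all (D : {fset form}) H P := forall X, X \in D -> reduces X H P.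

Definition hyps_supported (C : base) (H : seq hyp) :=
  forall h, h \in H -> Defs.support C (fst h |` atomset (snd h)).

Definition csupport (B : base) (D : {fset form}) : Prop :=
  forall C, extends B C -> forall H P, reduces_all D H P -> hyps_supported C H ->
    derivable C fset0 P.

Lemma reduces_mono F H H' P P' :
  {subset H <= H'} -> P `<=` P' -> reduces F H P -> reduces F H' P'.
Proof.
move=> sH sP; elim: F => [p|//|A IA C IC|A IA C IC|A IA C IC] /=.
- exact: (fsubsetP sP).
- by case=> [/IA|/IC]; [left|right].
- by case=> /IA ? /IC ?.
- case=> [[Th [ThH ThP]] /IC ?]; split=> //; exists Th; split; first exact: sH.
  exact: fsubset_trans sP.
Qed.

Lemma reduces_all_mono D H H' P P' :
  {subset H <= H'} -> P `<=` P' -> reduces_all D H P -> reduces_all D H' P'.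
Proof. by move=> sH sP hD X /hD; apply: reduces_mono. Qed.

Lemma reduces_all_cons D h H P : reduces_all D H P -> reduces_all D (h :: H) P.
Proof. by apply: reduces_all_mono => // x xH; rewrite inE xH orbT. Qed.

Lemma reduces_allU A B H P :
  reduces_all (A `|` B) H P <-> reduces_all A H P /\ reduces_all B H P.
Proof.
split=> [h|[hA hB] X /fsetUP [/hA|/hB] //].
by split=> X XI; apply: h; rewrite inE XI ?orbT.
Qed.

Lemma reduces_all1 A H P : reduces_all [fset A] H P <-> reduces A H P.
Proof. by split=> [h|h X]; [apply: h; rewrite inE|rewrite inE => /eqP ->]. Qed.

Lemma reduces_all_atomset Th H P : reduces_all (atomset Th) H P <-> Th `<=` P.
Proof.
split=> [h|h X].
  by apply/fsubsetP=> p pT; apply: (h (Atom p)); rewrite mem_atomset.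
by rewrite mem_atomset; case: X => // p /(fsubsetP h).
Qed.

Lemma reduces_all_atomic D H P : (forall F, F \in D -> is_atom F) ->
  reduces_all D H P <-> atoms_of D `<=` P.
Proof.
move=> hD; split=> [h|h X XD].
  by apply/fsubsetP=> p; rewrite mem_atoms_of => /h.
have := hD X XD; move: XD; case: X => // p pD _; apply: (fsubsetP h).
by rewrite mem_atoms_of.
Qed.

Lemma csupport_extends B B' D : extends B B' -> csupport B D -> csupport B' D.
Proof. by move=> BB' h C /(extends_trans BB'); apply: h. Qed.

Lemma csupport_reduces B D D' :
  (forall H P, reduces_all D' H P -> reduces_all D H P) -> csupport B D -> csupport B D'.
Proof. by move=> s h C BC H P /s; apply: h. Qed.

Lemma derivable_csupport_atomic B D : (forall F, F \in D -> is_atom F) ->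
  derivable B fset0 (atoms_of D) <-> csupport B D.
Proof.
move=> hD; split=> [d C BC H P /(reduces_all_atomic H P hD) DP _|h].
  exact: derivable_weakenr DP (derivable_extends BC d).
apply: (h B (@extends_refl B) [::] (atoms_of D)); last by move=> ?.
exact/(reduces_all_atomic _ _ hD).
Qed.

Lemma csupport_bot B G : csupport B (Bot |` G) <-> csupport B G.
Proof.
split; apply: csupport_reduces => H P; last by move=> /reduces_allU [].
by move=> hG; apply/reduces_allU; split=> //; apply/reduces_all1.
Qed.

Lemma csupport_and B A C G :
  csupport B (And A C |` G) <-> csupport B (A |` G) /\ csupport B (C |` G).
Proof.
split=> [h|[hA hC]].
  by split; apply: csupport_reduces h => H P /reduces_allU [/reduces_all1 p pG];
    apply/reduces_allU; split=> //; apply/reduces_all1; [left|right].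
move=> C0 BC0 H P /reduces_allU [/reduces_all1 [pA|pC] pG].
  by apply: hA => //; apply/reduces_allU; split=> //; apply/reduces_all1.
by apply: hC => //; apply/reduces_allU; split=> //; apply/reduces_all1.
Qed.

Lemma csupport_or B A C G :
  csupport B (Or A C |` G) <-> csupport B (A |` (C |` G)).
Proof.
split; apply: csupport_reduces => H P.
  move=> /reduces_allU [/reduces_all1 pA /reduces_allU [/reduces_all1 pC pG]].
  by apply/reduces_allU; split=> //; apply/reduces_all1.
move=> /reduces_allU [/reduces_all1 [pA pC] pG].
apply/reduces_allU; split; first exact/reduces_all1.
by apply/reduces_allU; split=> //; apply/reduces_all1.
Qed.

Lemma csupport_imp B A C G :
  (forall B' Th, Defs.support B' (A |` atomset Th) <-> csupport B' (A |` atomset Th)) ->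
  csupport B (Imp A C |` G) <->
  (forall B', extends B B' -> forall Th,
     csupport B' (A |` atomset Th) -> csupport B' (C |` (atomset Th `|` G))).
Proof.
move=> suppA; split=> [h B' BB' Th sA|h].
  move=> C0 BC0 H P /reduces_allU [/reduces_all1 pC].
  move=> /reduces_allU [/reduces_all_atomset ThP pG] hH.
  apply: (h C0 (extends_trans BB' BC0) ((A, Th) :: H) P).
    apply/reduces_allU; split; last exact: reduces_all_cons.
    apply/reduces_all1; split; first by exists Th; rewrite inE eqxx.
    by apply: reduces_mono pC => // x xH; rewrite inE xH orbT.
  move=> h0; rewrite inE => /orP [/eqP -> /=|/hH //].
  by apply/suppA; apply: csupport_extends BC0 sA.
move=> C0 BC0 H P /reduces_allU [/reduces_all1 [[Th [ThH ThP]] pC] pG] hH.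
have sA : csupport C0 (A |` atomset Th) by apply/suppA; exact: hH _ ThH.
apply: (h C0 BC0 Th sA C0 (@extends_refl C0) H P) => //.
apply/reduces_allU; split; first exact/reduces_all1.
by apply/reduces_allU; split=> //; apply/reduces_all_atomset.
Qed.

(* The fuel [n] only needs to bound the weight, which each clause decreases. *)
Lemma supp_csupport n B D : weight D <= n -> supp n B D <-> csupport B D.
Proof.
elim/ltn_ind: n B D => -[|n] IH B D wD.
  apply: derivable_csupport_atomic => F FD; apply/negPn/negP => /fsize_gt0 F_gt0.
  by have := leq_trans F_gt0 (leq_trans (fsize_le_weight FD) wD).
rewrite /=; case E: (pick_complex D) => [F|]; last first.
  by apply: derivable_csupport_atomic; apply: pick_complex_None.
have [FD nF] := pick_complexP E.
have wDF := weight_fsetD1 FD.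
rewrite -[in csupport B D](fsetD1K FD).
set G := D `\ F in wDF *; clearbody G; clear E FD.
have IHn B0 X : weight X <= n -> supp n B0 X <-> csupport B0 X by apply: IH.
case: F nF wDF => // [|A C|A C|A C] _ wDF; rewrite wDF /= in wD.
- by rewrite csupport_bot; apply: IHn; lia.
- rewrite csupport_and -!IHn //.
    by have := weight_fsetU1 C G; lia.
  by have := weight_fsetU1 A G; lia.
- rewrite csupport_or -IHn //.
  by have := weight_fsetU1 A (C |` G); have := weight_fsetU1 C G; lia.
- have wA Th : weight (A |` atomset Th) <= n.
    by have := weight_fsetU1 A (atomset Th); rewrite weight_atomset; lia.
  have wC Th : weight (C |` (atomset Th `|` G)) <= n.
    have := weight_fsetU1 C (atomset Th `|` G); have := weightU (atomset Th) G.
    by rewrite weight_atomset; lia.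
  rewrite csupport_imp => [|B' Th]; last exact: IH _ (wA Th) _ _ (leqnn _).
  split=> h B' BB' Th.
    by move=> /(IHn _ _ (wA Th)) /(h B' BB' Th) /IHn; apply.
  by move=> /(IHn _ _ (wA Th)) /(h B' BB' Th) /IHn; apply.
Qed.

Lemma support_csupport B D : Defs.support B D <-> csupport B D.
Proof. exact: supp_csupport. Qed.

Definition csupport_at (C : base) (S : {fset atom}) (D : {fset form}) : Prop :=
  forall C', extends C C' -> forall H P, S `<=` P -> reduces_all D H P ->
    hyps_supported C' H -> derivable C' fset0 P.

Lemma support_csupport_at C S D : Defs.support C (atomset S `|` D) <-> csupport_at C S D.
Proof.
rewrite support_csupport; split=> h C' CC' H P.
  by move=> SP pD; apply: h => //; apply/reduces_allU; split=> //; apply/reduces_all_atomset.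
by move=> /reduces_allU [/reduces_all_atomset SP pD]; apply: h.
Qed.

Lemma support_csupport_at1 C A Th : Defs.support C (A |` atomset Th) <-> csupport_at C Th [fset A].
Proof. by rewrite fsetUC support_csupport_at. Qed.

Lemma csupport_at_mono C C' S S' D D' : extends C C' -> S `<=` S' ->
  (forall H P, reduces_all D' H P -> reduces_all D H P) ->
  csupport_at C S D -> csupport_at C' S' D'.
Proof.
move=> CC' SS' sD h C0 C'C0 H P S'P /sD pD; apply: h => //.
  exact: extends_trans C'C0.
exact: fsubset_trans S'P.
Qed.

Lemma hyps_supported_extends C C' H :
  extends C C' -> hyps_supported C H -> hyps_supported C' H.
Proof.
move=> CC' hH h /hH /support_csupport hC.
by apply/support_csupport; apply: csupport_extends hC.
Qed.

(* Cut on [A]: the reduction set [P] itself is fed back as the atoms of [A]. *)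
Lemma csupport_at_cut C S E A R : csupport_at C S (A |` E) ->
  (forall C' S', extends C C' -> S `<=` S' ->
     csupport_at C' S' [fset A] -> csupport_at C' S' R) ->
  csupport_at C S (E `|` R).
Proof.
move=> hAE hR C' CC' H P SP /reduces_allU [pE pR] hH.
have hA : csupport_at C' P [fset A].
  move=> C'' C'C'' H' P' PP' /reduces_all1 pA hH'.
  apply: (hAE C'' (extends_trans CC' C'C'') (H ++ H') P').
  - exact: fsubset_trans PP'.
  - apply/reduces_allU; split.
      by apply/reduces_all1; apply: reduces_mono pA => // x xH; rewrite mem_cat xH orbT.
    by apply: reduces_all_mono pE => // x xH; rewrite mem_cat xH.
  - move=> h; rewrite mem_cat => /orP [/(hyps_supported_extends C'C'' hH)|/hH'] //.
exact: (hR C' P CC' SP hA C' (@extends_refl C') H P (fsubset_refl _) pR hH).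
Qed.

Lemma csupport_at_mp C S A B :
  csupport_at C S [fset A] -> csupport_at C S [fset Imp A B] -> csupport_at C S [fset B].
Proof.
move=> hA hI C' CC' H P SP /reduces_all1 pB hH.
apply: (hI C' CC' ((A, P) :: H) P SP).
  apply/reduces_all1; split; first by exists P; rewrite inE eqxx.
  by apply: reduces_mono pB => // x xH; rewrite inE xH orbT.
move=> h; rewrite inE => /orP [/eqP -> /=|/hH //].
by apply/support_csupport_at1; apply: csupport_at_mono hA.
Qed.

Definition supports_each (C : base) (S : {fset atom}) (G : {fset form}) :=
  forall X, X \in G -> csupport_at C S [fset X].

Definition entails (G D : {fset form}) :=
  forall C S, supports_each C S G -> csupport_at C S D.

Lemma supports_each_mono G C C' S S' :
  extends C C' -> S `<=` S' -> supports_each C S G -> supports_each C' S' G.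
Proof. by move=> CC' SS' h X /h; apply: csupport_at_mono. Qed.

Lemma supports_eachU C S G G' :
  supports_each C S (G `|` G') <-> supports_each C S G /\ supports_each C S G'.
Proof.
split=> [h|[hG hG'] X /fsetUP [/hG|/hG'] //].
by split=> X XG; apply: h; rewrite inE XG ?orbT.
Qed.

Lemma supports_each1 C S A : supports_each C S [fset A] <-> csupport_at C S [fset A].
Proof. by split=> [h|h X]; [apply: h; rewrite inE|rewrite inE => /eqP ->]. Qed.

Lemma entails_init G D A : entails (G `|` [fset A]) ([fset A] `|` D).
Proof.
move=> C S /supports_eachU [_ /supports_each1 hA].
by apply: csupport_at_mono hA => // H P /reduces_allU [].
Qed.

Lemma entails_Lbot G D : entails (G `|` [fset Bot]) D.
Proof.
move=> C S /supports_eachU [_ /supports_each1 hBot].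
by apply: csupport_at_mono hBot => // H P _; apply/reduces_all1.
Qed.

Lemma entails_Rbot G D : entails G D -> entails G ([fset Bot] `|` D).
Proof.
move=> hGD C S /hGD; apply: csupport_at_mono => // H P.
by move=> /reduces_allU [].
Qed.

Lemma entails_Land G D A B :
  entails ([fset A; B] `|` G) D -> entails ([fset And A B] `|` G) D.
Proof.
move=> hGD C S /supports_eachU [/supports_each1 hAB hG]; apply: hGD.
apply/supports_eachU; split=> //; apply/supports_eachU.
by split; apply/supports_each1; apply: csupport_at_mono hAB => // H P /reduces_all1 p;
  apply/reduces_all1; [left|right].
Qed.

Lemma entails_Rand G D G' D' A B :
  entails G (D `|` [fset A]) -> entails G' (D' `|` [fset B]) ->
  entails (G `|` G') (D `|` D' `|` [fset And A B]).
Proof.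
move=> hA hB C S /supports_eachU [/hA {}hA /hB {}hB].
move=> C' CC' H P SP /reduces_allU [/reduces_allU [pD pD'] /reduces_all1 [pA|pB]] hH.
  by apply: (hA C' CC' H P SP) => //; apply/reduces_allU; split=> //; apply/reduces_all1.
by apply: (hB C' CC' H P SP) => //; apply/reduces_allU; split=> //; apply/reduces_all1.
Qed.

Lemma entails_Lor G D G' D' A B :
  entails ([fset A] `|` G) D -> entails ([fset B] `|` G') D' ->
  entails ([fset Or A B] `|` G `|` G') (D `|` D').
Proof.
move=> hA hB C S /supports_eachU [/supports_eachU [/supports_each1 hAB hG] hG'].
have hBA : csupport_at C S (A |` [fset B]).
  apply: csupport_at_mono hAB => // H P /reduces_allU [/reduces_all1 pA /reduces_all1 pB].
  exact/reduces_all1.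
have hBD : csupport_at C S ([fset B] `|` D).
  apply: (csupport_at_cut hBA) => C' S' CC' SS' {}hA'; apply: hA.
  by apply/supports_eachU; split; [apply/supports_each1|apply: supports_each_mono hG].
apply: (csupport_at_cut hBD) => C' S' CC' SS' hB'; apply: hB.
by apply/supports_eachU; split; [apply/supports_each1|apply: supports_each_mono hG'].
Qed.

Lemma entails_Ror G D A B : entails G (D `|` [fset A; B]) -> entails G (D `|` [fset Or A B]).
Proof.
move=> hGD C S /hGD; apply: csupport_at_mono => // H P.
move=> /reduces_allU [pD /reduces_all1 [pA pB]].
by apply/reduces_allU; split=> // X; rewrite !inE => /orP [/eqP ->|/eqP ->].
Qed.

Lemma entails_Limp G D G' D' A B :
  entails G (D `|` [fset A]) -> entails ([fset B] `|` G') D' ->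
  entails ([fset Imp A B] `|` G `|` G') (D `|` D').
Proof.
move=> hA hB C S /supports_eachU [/supports_eachU [/supports_each1 hImp hG] hG'].
have hAD : csupport_at C S (A |` D) by rewrite fsetUC; apply: hA.
apply: (csupport_at_cut hAD) => C' S' CC' SS' hA'; apply: hB.
apply/supports_eachU; split; last exact: supports_each_mono hG'.
by apply/supports_each1; apply: csupport_at_mp hA' _; apply: csupport_at_mono hImp.
Qed.

Lemma entails_Rimp G D A B :
  entails ([fset A] `|` G) (D `|` [fset B]) -> entails G (D `|` [fset Imp A B]).
Proof.
move=> hGD C S hG C' CC' H P SP.
move=> /reduces_allU [pD /reduces_all1 [[Th [ThH ThP]] pB]] hH.
have hA : csupport_at C' P [fset A].
  by apply: csupport_at_mono (proj1 (support_csupport_at1 _ _ _) (hH _ ThH)).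
have hDB : csupport_at C' P (D `|` [fset B]).
  apply: hGD; apply/supports_eachU.
  by split; [apply/supports_each1|apply: supports_each_mono hG].
apply: (hDB C' (@extends_refl C') H P (fsubset_refl _)) => //.
by apply/reduces_allU; split=> //; apply/reduces_all1.
Qed.

Lemma CLp_entails G D : CLp G D -> entails G D.
Proof.
elim=> *.
- exact: entails_init.
- exact: entails_Lbot.
- exact: entails_Rbot.
- exact: entails_Land.
- exact: entails_Rand.
- exact: entails_Lor.
- exact: entails_Ror.
- exact: entails_Limp.
- exact: entails_Rimp.
Qed.

Theorem mainTheorem6 (Gamma Delta : {fset form}) :
  CLp Gamma Delta -> cf_valid Gamma Delta.
Proof.
move=> /CLp_entails hGD B _; rewrite /supports; case: ifP => [/eqP G0|_].
  have -> : Delta = atomset fset0 `|` Delta by rewrite /atomset imfset0 fset0U.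
  by apply/support_csupport_at; apply: hGD => X; rewrite G0 inE.
move=> C _ Th hTh; apply/support_csupport_at; apply: hGD => X XG.
have /support_csupport_at := hTh X XG; apply: csupport_at_mono => //.
exact: bigfcup_sup.
Qed.
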